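(* There is an absolute constant $C > 0$ such that for every $L \geq 1$, $m \geq 1$, $k^* \in [m]$, $i \in \{0,\ldots,L\}$, $k\in[m]$ and $\lambda \in [m]^{L+1}$, the length (number of elementary steps) of the path $\gamma_{\lambda,\lambda_{[i,k]}}$ satisfies $|\gamma_{\lambda,\lambda_{[i,k]}}| \leq C L^{\log_2 3}$.
   Context: States are $\lambda = (\lambda_0,\ldots,\lambda_L) \in [m]^{L+1}$; coordinate $\ell$ is level $\ell$. $\lambda_{[i,k]}$ is $\lambda$ with the level-$i$ entry replaced by $k$. The procedure $\mathbf{Swap}(a,b)$ ($0\le a\le b\le L$): if $b - a \leq 1$, perform the single elementary operation exchanging the entries at levels $a$ and $b$; otherwise with $h = \lfloor (a+b)/2 \rfloor$ perform $\mathbf{Swap}(a,h)$, then $\mathbf{Swap}(h,b)$, then $\mathbf{Swap}(a,h)$. The path $\gamma_{\lambda,\lambda_{[i,k]}}$ (with $k^*$ a fixed element of $[m]$) starts at $\lambda$ and performs in order the elementary or recursive operations: (1) set the level-0 entry to $k^*$; (2) $\mathbf{Swap}(0,i)$; (3) set the level-0 entry to $k$; (4) $\mathbf{Swap}(0,i)$; (5) set the level-0 entry to $\lambda_0$. Its length $|\gamma_{\lambda,\lambda_{[i,k]}}|$ is the total number of elementary operations performed. *)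

From mathcomp Require Import all_boot.
From Stdlib Require Import Reals.
Set Implicit Arguments. Unset Strict Implicit. Unset Printing Implicit Defensive.

(* States: lambda : {ffun 'I_L.+1 -> 'I_m}; entry at level l is lambda l.
   [m] is modelled by 'I_m (labels 0..m-1 instead of 1..m; immaterial). *)

Inductive elem_op (m : nat) : Type :=
| SetLevel0 of 'I_m
| Exch of nat & nat.

(* Semantics of an elementary operation (levels out of range: no-op). *)
Definition apply_op (L m : nat) (o : elem_op m) (s : {ffun 'I_L.+1 -> 'I_m})
  : {ffun 'I_L.+1 -> 'I_m} :=
  match o with
  | SetLevel0 v => [ffun l : 'I_L.+1 => if val l == 0 then v else s l]
  | Exch a b => [ffun l : 'I_L.+1 =>
       if val l == a then s (inord b)
       else if val l == b then s (inord a) else s l]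
  end.

(* Swap(a,b), computed with fuel b - a (which suffices, since each recursive
   call strictly decreases b - a when b - a >= 2). *)
Fixpoint swap_aux (m : nat) (fuel a b : nat) : seq (elem_op m) :=
  match fuel with
  | 0 => [:: Exch m a b]
  | f.+1 =>
      if b - a <= 1 then [:: Exch m a b]
      else let h := (a + b)./2 in
           swap_aux m f a h ++ swap_aux m f h b ++ swap_aux m f a h
  end.

Definition Swap (m a b : nat) : seq (elem_op m) := swap_aux m (b - a) a b.

Definition gamma_ops (L m : nat) (kstar : 'I_m) (lambda : {ffun 'I_L.+1 -> 'I_m})
  (i : 'I_L.+1) (k : 'I_m) : seq (elem_op m) :=
  [:: SetLevel0 kstar] ++ Swap m 0 i ++ [:: SetLevel0 k] ++ Swap m 0 i
  ++ [:: SetLevel0 (lambda ord0)].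

Definition gamma_states (L m : nat) (kstar : 'I_m) (lambda : {ffun 'I_L.+1 -> 'I_m})
  (i : 'I_L.+1) (k : 'I_m) : seq {ffun 'I_L.+1 -> 'I_m} :=
  scanl (fun s o => apply_op o s) lambda (gamma_ops kstar lambda i k).

Definition gamma_length (L m : nat) (kstar : 'I_m) (lambda : {ffun 'I_L.+1 -> 'I_m})
  (i : 'I_L.+1) (k : 'I_m) : nat :=
  size (gamma_ops kstar lambda i k).

From mathcomp Require Import all_boot zify.
From Stdlib Require Import Reals Lra.

(* Swap(a,b) halves the gap b - a and recurses three times, so a gap of at
   most 2^n costs at most 3^n exchanges; with n = floor(log2 L) every gap
   i - 0 <= L is below 2^(n+1), and 3^n = 2^(n log2 3) <= L^(log2 3). *)

(* [Reals] rebinds [^] on nat to [Nat.pow], so [expn] is written out. *)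

Lemma size_swap_aux m fuel a b n :
  b - a <= expn 2 n -> size (swap_aux m fuel a b) <= expn 3 n.
Proof.
elim: fuel a b n => [|fuel IH] a b n gap_le /=; first by rewrite expn_gt0.
case: ifP => gap_small /=; first by rewrite expn_gt0.
case: n gap_le => [|n]; first by rewrite expn0 in gap_small *; lia.
rewrite expnS => gap_le; rewrite !size_cat expnS.
have left_half : (a + b)./2 - a <= expn 2 n by lia.
have right_half : b - (a + b)./2 <= expn 2 n by lia.
by have := IH _ _ _ left_half; have := IH _ _ _ right_half; lia.
Qed.

Lemma size_Swap m a b n : b - a <= expn 2 n -> size (Swap m a b) <= expn 3 n.
Proof. exact: size_swap_aux. Qed.

Lemma gamma_lengthE L m (kstar : 'I_m) lambda (i : 'I_L.+1) k :
  gamma_length kstar lambda i k = (size (Swap m 0 i)).*2 + 3.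
Proof. by rewrite /gamma_length /gamma_ops !size_cat /=; lia. Qed.

Lemma gamma_length_le L m (kstar : 'I_m) lambda (i : 'I_L.+1) k :
  0 < L -> gamma_length kstar lambda i k <= 9 * expn 3 (trunc_log 2 L).
Proof.
move=> L_gt0; set n := trunc_log 2 L.
have i_lt : i - 0 <= expn 2 n.+1.
  by have := @trunc_log_ltn 2 L isT; rewrite -/n; have := ltn_ord i; lia.
have := size_Swap m 0 i n.+1 i_lt; rewrite gamma_lengthE expnS.
by have := expn_gt0 3 n; lia.
Qed.

Lemma INR_expn a n : INR (expn a n) = (INR a ^ n)%R.
Proof. by elim: n => [|n IH]; rewrite ?expn0 // expnS -multE mult_INR IH. Qed.

Lemma pow_le_Rpower (a b x : R) (n : nat) :
  (1 < a)%R -> (1 < b)%R -> (a ^ n <= x)%R ->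
  (b ^ n <= Rpower x (ln b / ln a))%R.
Proof.
move=> a_gt1 b_gt1 an_le.
have ln_a_gt0 : (0 < ln a)%R by rewrite -ln_1; apply: ln_increasing; lra.
have ln_b_gt0 : (0 < ln b)%R by rewrite -ln_1; apply: ln_increasing; lra.
have an_gt0 : (0 < a ^ n)%R by apply: pow_lt; lra.
have -> : (b ^ n = Rpower (a ^ n) (ln b / ln a))%R.
  rewrite -!Rpower_pow; try lra.
  rewrite Rpower_mult /Rpower; congr exp; field; lra.
apply: Rle_Rpower_l; last lra.
by apply/Rlt_le/Rdiv_lt_0_compat.
Qed.

Theorem lemma5 :
  exists C : R, (0 < C)%R /\
    forall (L m : nat) (kstar : 'I_m) (i : 'I_L.+1) (k : 'I_m)
           (lambda : {ffun 'I_L.+1 -> 'I_m}),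
      (1 <= L)%N -> (1 <= m)%N ->
      (INR (gamma_length kstar lambda i k)
         <= C * Rpower (INR L) (ln 3 / ln 2))%R.
Proof.
exists 9%R; split; first lra.
move=> L m kstar i k lambda L_ge1 _.
set n := trunc_log 2 L.
have INR2 : INR 2 = 2%R by simpl; lra.
have INR3 : INR 3 = 3%R by simpl; lra.
have INR9 : INR 9 = 9%R by simpl; lra.
have pow2_le : (2 ^ n <= INR L)%R.
  by rewrite -INR2 -INR_expn; apply/le_INR/leP/trunc_logP.
have pow3_le : (3 ^ n <= Rpower (INR L) (ln 3 / ln 2))%R.
  by apply: pow_le_Rpower pow2_le; lra.
have := le_INR _ _ (elimT leP (gamma_length_le _ _ kstar lambda i k L_ge1)).
rewrite -/n mult_INR INR_expn INR3 INR9; lra.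
Qed.
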